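(* Let $G$ be a finite group with $g_k(G)\geq N$, where $k\geq2$, and let $1\to C\to G\to G'\to1$ be an exact sequence with $C$ cyclic. Then $g_{k-1}(G')\geq N$.
   Context: For a finite group $G$ and positive integer $N$, $r_N(G)$ is the minimum number of generators among subgroups of $G$ of index at most $N$, and $g_k(G)=\max\{N : |G|\geq N \text{ and } r_N(G)\geq k\}$. *)

From mathcomp Require Import all_boot all_fingroup all_solvable.
Set Implicit Arguments. Unset Strict Implicit. Unset Printing Implicit Defensive.
Local Open Scope group_scope.

Definition ngen (gT : finGroupType) (H : {set gT}) : nat :=
  \big[minn/#|H|]_(X : {set gT} | <<X>> == H) #|X|.

Definition rN (gT : finGroupType) (N : nat) (G : {set gT}) : nat :=
  \big[minn/#|G|]_(H : {group gT} | (H \subset G) && (#|G : H| <= N)) ngen H.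

(* g_k(G) = max { N >= 1 : |G| >= N and r_N(G) >= k }  (0 if the set is empty) *)
Definition gk (gT : finGroupType) (k : nat) (G : {set gT}) : nat :=
  \max_(N < #|G|.+1 | (0 < N) && (k <= rN N G)) N.

From mathcomp Require Import all_boot all_fingroup all_solvable.
Set Implicit Arguments. Unset Strict Implicit. Unset Printing Implicit Defensive.
Local Open Scope group_scope.

(* Let 'ker f = <c>.  A subgroup H' of f @* G of index at most N pulls back to a
   subgroup H of G of the same index, and lifts of generators of H' together with
   c generate H; hence r_N(G) <= r_N(f @* G) + 1.  Moreover 'ker f has index
   #|f @* G| in G and is generated by one element, so r_N(G) >= k >= 2 forces
   N <= #|f @* G|. *)

Section BigMinNat.

Variables (I : finType) (P : pred I) (F : I -> nat) (d : nat).

Lemma geq_bigmin n :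
  n <= d -> (forall i, P i -> n <= F i) -> n <= \big[minn/d]_(i | P i) F i.
Proof.
move=> le_nd le_nF; apply: (big_ind (leq n)) => // x y le_nx le_ny.
by rewrite leq_min le_nx le_ny.
Qed.

Lemma bigmin_leq i : P i -> \big[minn/d]_(j | P j) F j <= F i.
Proof.
move=> Pi; elim: (index_enum I) (mem_index_enum i) => // j r IHr.
rewrite inE big_cons => /predU1P[<-|/IHr le_rF]; first by rewrite Pi geq_minl.
by case: ifP => // _; apply: leq_trans (geq_minr _ _) le_rF.
Qed.

Lemma bigmin_leq_id : \big[minn/d]_(j | P j) F j <= d.
Proof.
elim/big_rec: _ => // j x _ le_xd.
exact: leq_trans (geq_minr _ _) le_xd.
Qed.

End BigMinNat.

Section NumberOfGenerators.

Variable gT : finGroupType.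
Implicit Types (G H : {group gT}) (X : {set gT}).

Lemma ngen_leq (A X : {set gT}) : <<X>> = A -> ngen A <= #|X|.
Proof. by move=> genX; apply: bigmin_leq; rewrite genX eqxx. Qed.

Lemma ngen_geq H n : (forall X, <<X>> = H -> n <= #|X|) -> n <= ngen H.
Proof.
move=> le_nX; apply: geq_bigmin; first by apply: le_nX; rewrite genGid.
by move=> X /eqP; apply: le_nX.
Qed.

Lemma ngen_cycle (x : gT) : ngen <[x]> <= 1.
Proof. by rewrite -(cards1 x) ngen_leq. Qed.

Lemma rN_leq N G H : H \subset G -> #|G : H| <= N -> rN N G <= ngen H.
Proof.
move=> sHG iHG.
by apply: (bigmin_leq (fun K : {group gT} => ngen K)); rewrite sHG.
Qed.

Lemma rN_geq N G n :
    0 < N -> (forall H, H \subset G -> #|G : H| <= N -> n <= ngen H) ->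
  n <= rN N G.
Proof.
move=> N_gt0 le_nH; apply: geq_bigmin => [|H /andP[]]; last exact: le_nH.
have le_nG : n <= ngen G by apply: le_nH; rewrite ?indexgg.
by apply: leq_trans le_nG (ngen_leq (genGid G)).
Qed.

Lemma rN_antimono N M G : N <= M -> rN M G <= rN N G.
Proof.
move=> le_NM; apply: geq_bigmin => [|H /andP[sHG iHG]].
  exact: bigmin_leq_id.
exact: rN_leq sHG (leq_trans iHG le_NM).
Qed.

Lemma gk_rN k N G : 0 < N -> N <= gk k G -> k <= rN N G.
Proof.
move=> N_gt0 le_N_gk; rewrite leqNgt; apply/negP => lt_rN_k.
suff : gk k G < N by rewrite ltnNge le_N_gk.
rewrite -(prednK N_gt0) ltnS; apply/bigmax_leqP => M /andP[M_gt0 le_k_rM].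
rewrite leqNgt prednK //; apply/negP => le_NM.
by rewrite ltnNge (leq_trans le_k_rM (rN_antimono G le_NM)) in lt_rN_k.
Qed.

Lemma gk_geq k N G : 0 < N -> N <= #|G| -> k <= rN N G -> N <= gk k G.
Proof.
move=> N_gt0 le_NG le_k_rN; rewrite -ltnS in le_NG.
by apply: (leq_bigmax_cond (Ordinal le_NG)); rewrite /= N_gt0.
Qed.

End NumberOfGenerators.

Section Lifting.

Variables (gT rT : finGroupType) (G : {group gT}) (f : {morphism G >-> rT}).

Lemma morphim_lift : exists2 g : rT -> gT,
  {in f @* G, forall y, g y \in G} & {in f @* G, cancel g f}.
Proof.
pose g y := odflt 1 [pick x in G | f x == y].
suff gP y : y \in f @* G -> g y \in G /\ f (g y) = y.
  by exists g => y /gP[].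
case/morphimP=> x Gx _ ->; rewrite /g; case: pickP => [z /andP[Gz /eqP->] //|].
by move/(_ x); rewrite Gx eqxx.
Qed.

(* The lifted generators of H' together with generators of the kernel generate
   the whole preimage, since it is determined by its image and contains 'ker f. *)
Lemma ngen_morphpre (H' : {group rT}) (Y : {set gT}) (Z' : {set rT}) :
    H' \subset f @* G -> <<Z'>> = H' -> <<Y>> = 'ker f ->
  ngen (f @*^-1 H') <= #|Z'| + #|Y|.
Proof.
move=> sH'fG genZ' genY; have [g Gg gK] := morphim_lift.
have sZ'fG : Z' \subset f @* G by rewrite (subset_trans _ sH'fG) // -genZ' subset_gen.
have sYG : Y \subset G.
  by rewrite (subset_trans (subset_gen Y)) // genY; apply: subsetIl.
set X := g @: Z' :|: Y.
have sXG : X \subset G.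
  rewrite subUset sYG andbT; apply/subsetP=> _ /imsetP[y /(subsetP sZ'fG) fGy ->].
  exact: Gg.
have fgZ' : f @* (g @: Z') = Z'.
  rewrite morphimEsub ?(subset_trans _ sXG) ?subsetUl // -imset_comp.
  by rewrite -[RHS]imset_id; apply: eq_in_imset => y /(subsetP sZ'fG) /gK.
have fY1 : f @* Y \subset [1 rT] by rewrite -(morphim_ker f) morphimS // -genY subset_gen.
have genfX : <<f @* X>> = H'.
  rewrite morphimU fgZ' -genZ'; apply/eqP.
  rewrite eqEsubset (genS (subsetUl _ _)) andbT gen_subG subUset subset_gen.
  exact: subset_trans fY1 (sub1G _).
have genX : <<X>> = f @*^-1 H'.
  rewrite -genfX -morphim_gen // morphimGK // ?gen_subG //.
  by rewrite -genY genS ?subsetUr.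
apply: leq_trans (ngen_leq genX) _.
by rewrite (leq_trans (leq_card_setU _ _)) // leq_add2r leq_imset_card.
Qed.

Lemma rN_morphim N (Y : {set gT}) :
  0 < N -> <<Y>> = 'ker f -> rN N G - #|Y| <= rN N (f @* G).
Proof.
move=> N_gt0 genY; apply: rN_geq => // H' sH'fG iH'.
apply: ngen_geq => Z' genZ'; rewrite leq_subLR addnC.
apply: leq_trans (ngen_morphpre sH'fG genZ' genY).
apply: rN_leq; first exact: morphpre_sub.
by rewrite -{1}(morphimGK (normal_sub (ker_normal f)) (subxx G)) index_morphpre.
Qed.

Lemma rN_index_ker N : #|f @* G| <= N -> rN N G <= ngen ('ker f).
Proof.
rewrite card_morphim setIid; apply: rN_leq.
exact: subsetIl.
Qed.

End Lifting.

Theorem mainTheorem14 (gT rT : finGroupType) (G : {group gT})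
    (f : {morphism G >-> rT}) (k N : nat) :
  2 <= k -> 0 < N -> N <= gk k G -> cyclic ('ker f) ->
  N <= gk k.-1 (f @* G).
Proof.
move=> k_ge2 N_gt0 le_N_gk /cyclicP[c defK].
have le_k_rN := gk_rN N_gt0 le_N_gk.
have genK : <<[set c]>> = 'ker f by rewrite defK.
apply: gk_geq => //.
- rewrite leqNgt; apply/negP => /ltnW /rN_index_ker.
  rewrite defK => /leq_trans/(_ (ngen_cycle c)) le_rN1.
  by have := leq_trans k_ge2 (leq_trans le_k_rN le_rN1).
- apply: leq_trans (rN_morphim N_gt0 genK).
  by rewrite cards1 subn1 -!subn1 leq_sub2r.
Qed.
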